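(* Let $G$, $k\ge 3$, the choice strings $c_{i,j}$, $L=k+1$ and $d=k-2$ be as in the construction in the context, and let $s$ be a string of length $L$ such that every choice string $c_{i,j}$ ($1\le i<j\le k$) has a substring of length $L$ at Hamming distance at most $d$ from $s$. Then the first $k$ characters of $s$ are encoding symbols $\sigma_{h_1},\dots,\sigma_{h_k}$, and the vertices $v_{h_1},\dots,v_{h_k}$ are $k$ vertices forming a clique in $G$.
   Context: Let $G=(V,E)$ be an undirected simple graph with $V=\{v_1,\dots,v_n\}$ and edge set $E=\{e_1,\dots,e_m\}$, and let $k\ge 3$ be an integer; put $N=\binom{k}{2}$. The alphabet consists of pairwise distinct symbols: encoding symbols $\sigma_1,\dots,\sigma_n$, string identification symbols $\varphi_1,\dots,\varphi_N$, and a synchronizing symbol $\#$. Order the pairs $(i,j)$ with $1\le i<j\le k$ lexicographically, $(1,2),(1,3),\dots,(1,k),(2,3),\dots,(k-1,k)$, and let $i'$ denote the position of $(i,j)$ in this order. For an edge $e$ joining $v_r$ and $v_s$ with $r<s$ define $\mathrm{block}(i,j,e)=\varphi_{i'}^{\,i-1}\,\sigma_r\,\varphi_{i'}^{\,j-i-1}\,\sigma_s\,\varphi_{i'}^{\,k-j}\,\#$ (a string of length $k+1$), and the choice string $c_{i,j}=\mathrm{block}(i,j,e_1)\,\varphi_{i'}^{\,k}\,\mathrm{block}(i,j,e_2)\,\varphi_{i'}^{\,k}\cdots\varphi_{i'}^{\,k}\,\mathrm{block}(i,j,e_m)$. Set $L=k+1$ and $d=k-2$. *)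

From mathcomp Require Import all_boot.
Set Implicit Arguments. Unset Strict Implicit. Unset Printing Implicit Defensive.

(* Symbols: encoding symbols sigma_r (r : 'I_n, 0-based: sigma_{r+1} in the
   paper), identification symbols phi_a (a : nat, 0-based: phi_{a+1}; only
   a < 'C(k,2) belong to the alphabet), and the synchronizing symbol #. *)
Definition sym (n : nat) := (('I_n + nat) + unit)%type.
Definition Sig {n} (r : 'I_n) : sym n := inl (inl r).
Definition Phi {n} (a : nat) : sym n := inl (inr a).
Definition Hash {n} : sym n := inr tt.

Definition in_alphabet (k : nat) {n} (x : sym n) : bool :=
  match x with
  | inl (inl _) => true
  | inl (inr a) => a < 'C(k, 2)
  | inr _ => true
  end.

Definition pair_pos (k i j : nat) : nat :=
  index (i, j) [seq p <- [seq (a, b) | a <- iota 0 k, b <- iota 0 k] | p.1 < p.2].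

(* block(i,j,e) with 0-based i < j < k; edge e = (v_r, v_s) with r < s. *)
Definition block (k : nat) {n} (i j : nat) (e : 'I_n * 'I_n) : seq (sym n) :=
  let f := Phi (pair_pos k i j) in
  nseq i f ++ [:: Sig e.1] ++ nseq (j - i - 1) f ++ [:: Sig e.2]
    ++ nseq (k - 1 - j) f ++ [:: Hash].

Definition choice_string (k : nat) {n} (E : seq ('I_n * 'I_n)) (i j : nat)
  : seq (sym n) :=
  match E with
  | [::] => [::]
  | e :: es => block k i j e ++
      flatten [seq nseq k (Phi (pair_pos k i j)) ++ block k i j e' | e' <- es]
  end.

(* Hamming distance (used on strings of equal length) *)
Definition hamming {T : eqType} (s t : seq T) : nat :=
  count (fun p => p.1 != p.2) (zip s t).

Definition has_close_substring {T : eqType} (c s : seq T) (L d : nat) : Prop :=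
  exists p, p + L <= size c /\ hamming (take L (drop p c)) s <= d.

Definition adj {n} (E : seq ('I_n * 'I_n)) (u v : 'I_n) : bool :=
  ((u, v) \in E) || ((v, u) \in E).

From mathcomp Require Import all_boot zify.
Set Implicit Arguments. Unset Strict Implicit. Unset Printing Implicit Defensive.

(* Each choice string c_{i,j} is periodic with period 2k+1: a period is
   block(i,j,e) followed by phi^k, so it carries Sig e.1 at offset i, Sig e.2 at
   offset j, # at offset k and the identification symbol phi_(i,j) elsewhere.
   A window at Hamming distance at most k-2 from s agrees with s in at least 3
   of its k+1 positions, and each agreement sits either on an occurrence of
   phi_(i,j) in s or on a non-phi symbol of s.  When s contains no phi_(i,j),
   the three agreements are the three non-phi offsets of a single period, so
   s has Sig e.1, Sig e.2 and # at positions i-r, j-r and k-r for some edge e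
   and some shift r <= i.
   Distinct pairs have distinct identification symbols, so they share out the
   phi's of s.  Counting them shows that s holds at most k-2 phi's, hence some
   pair (0,t) is phi-free, which forces s_0 to be an encoding symbol and s_k = #.
   Every position 0 < t < k that is not an encoding symbol then needs its own
   phi_(0,t); these use up all phi's of s and leave no room for a # strictly
   inside s.  So every pair (i,j) with i > 0 is phi-free with shift 0, all of
   s_0 .. s_(k-1) are encoding symbols, s contains no phi at all, and every
   pair (i,j) gives an edge between the vertices encoded at positions i and j. *)

Lemma count_nth_iota (T : Type) (x0 : T) (a : pred T) (s : seq T) :
  count a s = count (fun q => a (nth x0 s q)) (iota 0 (size s)).
Proof. by rewrite -[in LHS](mkseq_nth x0 s) count_map. Qed.

Lemma sum_count_mem (T : eqType) (la s : seq T) :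
  uniq la -> \sum_(a <- la) count_mem a s = count (mem la) s.
Proof.
elim: la => [|a la IH] /=; first by rewrite big_nil count_pred0.
case/andP=> a_notin_la uniq_la; rewrite big_cons IH // -count_predUI.
rewrite [count (predI _ _) s](eq_count (a2 := pred0)) ?count_pred0 ?addn0.
  by apply: eq_count => x; rewrite /= inE.
by move=> x /=; case: eqP => // ->; apply/negbTE.
Qed.

Lemma sum_nat_ge_const (I : eqType) (r : seq I) (F : I -> nat) m :
  {in r, forall x, m <= F x} -> size r * m <= \sum_(x <- r) F x.
Proof.
elim: r => [|x r IH] F_ge; first by rewrite big_nil.
rewrite big_cons mulSn leq_add ?F_ge ?mem_head // IH // => y y_r.
by rewrite F_ge // inE y_r orbT.
Qed.

Lemma nth_nseq_cat_cons (T : Type) (x0 f y : T) m r o :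
  nth x0 (nseq m f ++ y :: r) o =
  if o < m then f else if o == m then y else nth x0 r (o - m.+1).
Proof.
rewrite nth_cat size_nseq; case: ltnP => [lt_o | ge_o]; first by rewrite nth_nseq lt_o.
have [-> | ne_om] := eqVneq o m; first by rewrite subnn.
have lt_mo : m < o by rewrite ltn_neqAle eq_sym ne_om.
by rewrite -(subnSK lt_mo).
Qed.

Lemma nth_flatten_const_size (T : Type) (x0 : T) m (ss : seq (seq T)) b o :
  all (fun t => size t == m) ss -> o < m ->
  nth x0 (flatten ss) (b * m + o) = nth x0 (nth [::] ss b) o.
Proof.
elim: ss b => [|t ss IH] [|b] /=; rewrite ?nth_nil // => /andP[/eqP size_t all_ss] lt_o.
  by rewrite nth_cat size_t lt_o.
by rewrite nth_cat size_t mulSn -addnA ltnNge leq_addr /= addKn IH.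
Qed.

Definition agreements (T : eqType) (x0 : T) (c s : seq T) (p : nat) : seq nat :=
  [seq q <- iota 0 (size s) | nth x0 c (p + q) == nth x0 s q].

Lemma close_substring_agreements (T : eqType) (x0 : T) (c s : seq T) d :
  has_close_substring c s (size s) d ->
  exists2 p, p + size s <= size c & size s - d <= size (agreements x0 c s p).
Proof.
case=> p [fit close]; exists p => //; move: close.
rewrite size_filter; set agree := fun q => _ == _.
have size_w : size (take (size s) (drop p c)) = size s.
  by rewrite size_take size_drop; case: ltnP; lia.
have -> : hamming (take (size s) (drop p c)) s = count (predC agree) (iota 0 (size s)).
  rewrite /hamming -(mkseq_nth (x0, x0) (zip _ _)) count_map size_zip size_w minnn.
  apply: eq_in_count => q; rewrite mem_iota => /andP[_ lt_q].
  by rewrite /= nth_zip ?size_w // nth_take // nth_drop.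
have := count_predC agree (iota 0 (size s)); rewrite size_iota; lia.
Qed.

Lemma agreements_le_count (T : eqType) (x0 : T) (P : pred T) (a : T) c s p :
  (forall x, P (nth x0 c x) -> nth x0 c x = a) ->
  size (agreements x0 c s p) <= count (pred1 a) s + count (predC P) s.
Proof.
move=> only_a; rewrite -count_predUI (count_nth_iota x0 (predU _ _)) size_filter.
apply: leq_trans (leq_addr _ _); apply: sub_count => q /eqP <- /=.
case P_c: (P (nth x0 c (p + q))); last by rewrite orbT.
by rewrite (only_a _ P_c) eqxx.
Qed.

Definition is_phi {n} (x : sym n) : bool := if x is inl (inr _) then true else false.
Definition is_sig {n} (x : sym n) : bool := if x is inl (inl _) then true else false.

Definition period (k : nat) {n} (i j : nat) (e : 'I_n * 'I_n) : seq (sym n) :=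
  block k i j e ++ nseq k (Phi (pair_pos k i j)).

Definition periods (k : nat) {n} (E : seq ('I_n * 'I_n)) (i j : nat) : seq (sym n) :=
  flatten [seq period k i j e | e <- E].

Definition period_sym (k : nat) {n} (i j : nat) (e : 'I_n * 'I_n) (o : nat) : sym n :=
  if o == i then Sig e.1 else if o == j then Sig e.2 else if o == k then Hash
  else Phi (pair_pos k i j).

Lemma cat_flatten_rotate (T U : Type) (y : seq T) (f : U -> seq T) (us : seq U) :
  flatten [seq y ++ f u | u <- us] ++ y = y ++ flatten [seq f u ++ y | u <- us].
Proof. by elim: us => [|u us IH] /=; rewrite ?cats0 // -!catA IH. Qed.

Section Periods.

Variables (k n i j : nat).
Hypothesis ijk : i < j < k.

Lemma size_period (e : 'I_n * 'I_n) : size (period k i j e) = k.*2.+1.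
Proof. rewrite /period /block !size_cat !size_nseq /=; lia. Qed.

Lemma nth_period (e : 'I_n * 'I_n) o :
  o < k.*2.+1 -> nth Hash (period k i j e) o = period_sym k i j e o.
Proof.
move=> lt_o; rewrite /period /block -!catA /= !nth_nseq_cat_cons nth_nseq /period_sym.
by repeat case: ifP => ?; try (exfalso; lia).
Qed.

Lemma choice_string_cat_phis (E : seq ('I_n * 'I_n)) : E != [::] ->
  choice_string k E i j ++ nseq k (Phi (pair_pos k i j)) = periods k E i j.
Proof. by case: E => [|e E] //= _; rewrite /periods /period /= -!catA cat_flatten_rotate. Qed.

Lemma size_periods (E : seq ('I_n * 'I_n)) :
  size (periods k E i j) = size E * k.*2.+1.
Proof. by rewrite /periods; elim: E => //= e E IH; rewrite size_cat size_period IH mulSn. Qed.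

Lemma size_choice_string (E : seq ('I_n * 'I_n)) :
  size (choice_string k E i j) = size E * k.*2.+1 - k.
Proof.
case: E => [|e E] //; have := congr1 size (choice_string_cat_phis (E := e :: E) isT).
rewrite size_cat size_nseq size_periods; lia.
Qed.

Lemma nth_periods (E : seq ('I_n * 'I_n)) e0 b o :
  o < k.*2.+1 -> b < size E ->
  nth Hash (periods k E i j) (b * k.*2.+1 + o) = period_sym k i j (nth e0 E b) o.
Proof.
move=> lt_o lt_b; rewrite nth_flatten_const_size ?(nth_map e0) ?nth_period //.
by apply/allP => _ /mapP[e _ ->]; rewrite size_period.
Qed.

Lemma nth_choice_string (E : seq ('I_n * 'I_n)) b :
  b < size E -> exists2 e, e \in E & forall o, o < k.*2.+1 ->
    b * k.*2.+1 + o < size (choice_string k E i j) ->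
    nth Hash (choice_string k E i j) (b * k.*2.+1 + o) = period_sym k i j e o.
Proof.
case: E => [|e0 E] // lt_b; exists (nth e0 (e0 :: E) b); first exact: mem_nth.
by move=> o lt_o lt_x; rewrite -(nth_periods e0) // -choice_string_cat_phis // nth_cat lt_x.
Qed.

Lemma choice_string_phi (E : seq ('I_n * 'I_n)) x :
  is_phi (nth Hash (choice_string k E i j) x) ->
  nth Hash (choice_string k E i j) x = Phi (pair_pos k i j).
Proof.
case: (ltnP x (size (choice_string k E i j))) => [lt_x | ge_x]; last by rewrite nth_default.
have lt_b : x %/ k.*2.+1 < size E.
  by rewrite ltn_divLR //; move: lt_x; rewrite size_choice_string; lia.
have [e _ nth_e] := nth_choice_string lt_b.
rewrite (divn_eq x k.*2.+1) nth_e ?ltn_pmod -?divn_eq //.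
by rewrite /period_sym; case: (_ == i); case: (_ == j); case: (_ == k).
Qed.

Lemma period_sym_fst (e : 'I_n * 'I_n) : period_sym k i j e i = Sig e.1.
Proof. by rewrite /period_sym eqxx. Qed.

Lemma period_sym_snd (e : 'I_n * 'I_n) : period_sym k i j e j = Sig e.2.
Proof. by rewrite /period_sym gtn_eqF ?eqxx //; case/andP: ijk. Qed.

Lemma period_sym_last (e : 'I_n * 'I_n) : period_sym k i j e k = Hash.
Proof.
have [lt_ik lt_jk] : i < k /\ j < k by lia.
by rewrite /period_sym (gtn_eqF lt_ik) (gtn_eqF lt_jk) eqxx.
Qed.

Lemma period_sym_nonphi (e : 'I_n * 'I_n) o :
  period_sym k i j e o != Phi (pair_pos k i j) -> o \in [:: i; j; k].
Proof.
by rewrite /period_sym !inE; case: (o == i); case: (o == j); case: (o == k); rewrite ?eqxx.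
Qed.

End Periods.

(* The residues of p, ..., p + k modulo 2k+1 form a cyclic interval of length
   k+1, which contains all of i < j < k only if it starts at a residue <= i. *)
Lemma window_meets_block k i j p (Q : seq nat) :
  i < j < k -> uniq Q -> 3 <= size Q ->
  {in Q, forall q, q <= k /\ (p + q) %% k.*2.+1 \in [:: i; j; k]} ->
  p %% k.*2.+1 <= i /\
  Q =i [:: i - p %% k.*2.+1; j - p %% k.*2.+1; k - p %% k.*2.+1].
Proof.
move=> ijk uniq_Q size_Q Q_res; set r := p %% k.*2.+1.
have lt_r : r < k.*2.+1 by rewrite ltn_pmod.
have Q_shift q : q \in Q ->
    q <= k /\ r + q \in [:: i; j; k; k.*2.+1 + i; k.*2.+1 + j; k.*2.+1 + k].
  case/Q_res => le_q res; split => //; move: res; rewrite -modnDml -/r.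
  have [lt_rq | ge_rq] := ltnP (r + q) k.*2.+1; first by rewrite modn_small // !inE; lia.
  have -> : r + q = 1 * k.*2.+1 + (r + q - k.*2.+1) by lia.
  rewrite modnMDl modn_small; last lia.
  rewrite !inE; lia.
case: (leqP r i) => [le_ri | lt_ir].
  split => //; apply: (uniq_min_size uniq_Q _ _).2 => [q /Q_shift[le_q]|//].
  rewrite !inE; lia.
exfalso; have [X size_X sub_QX] : exists2 X : seq nat, size X <= 2 & {subset Q <= X}.
  case: (leqP r k) => le_rk.
    by exists [:: j - r; k - r] => // q /Q_shift[le_q]; rewrite !inE; lia.
  by exists [:: k.*2.+1 + i - r; k.*2.+1 + j - r] => // q /Q_shift[le_q]; rewrite !inE; lia.
by have := leq_ltn_trans (leq_trans (uniq_leq_size uniq_Q sub_QX) size_X) size_Q; rewrite ltnn.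
Qed.

Lemma pair_pos_inj k i j i' j' : i < j < k -> i' < j' < k ->
  pair_pos k i j = pair_pos k i' j' -> (i, j) = (i', j').
Proof.
rewrite /pair_pos; set pairs := [seq p <- _ | _].
have mem_pairs a b : a < b < k -> (a, b) \in pairs.
  move=> abk; rewrite mem_filter /= (allpairs_f pair) ?mem_iota ?andbT //; lia.
by move=> /mem_pairs ij_in /mem_pairs ij'_in; apply: index_inj.
Qed.

Section CloseWindows.

Variables (n k : nat) (E : seq ('I_n * 'I_n)) (s : seq (sym n)).
Hypotheses (k_ge3 : 3 <= k) (size_s : size s = k.+1).
Hypothesis close : forall i j, i < j < k ->
  has_close_substring (choice_string k E i j) s k.+1 (k - 2).

Let phi_count i j := count_mem (Phi (pair_pos k i j)) s.
Let n_phi := count is_phi s.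

Lemma close_window_agreements i j : i < j < k -> exists2 p,
  p + k.+1 <= size (choice_string k E i j) &
  3 <= size (agreements Hash (choice_string k E i j) s p).
Proof.
move=> ijk; have := close ijk; rewrite -size_s.
case/(close_substring_agreements Hash) => p fit agr.
by exists p => //; move: agr; rewrite size_s; lia.
Qed.

Lemma phi_count_lower i j : i < j < k -> 3 <= phi_count i j + (k.+1 - n_phi).
Proof.
move=> ijk; have [p _ agr] := close_window_agreements ijk.
have <- : count (predC is_phi) s = k.+1 - n_phi.
  by rewrite -size_s -(count_predC is_phi s) addKn.
by apply: leq_trans agr _; apply: agreements_le_count; apply: choice_string_phi.
Qed.

Lemma phi_free_window_aligned i j : i < j < k -> phi_count i j = 0 ->
  exists r e, [/\ r <= i, e \in E, nth Hash s (i - r) = Sig e.1,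
    nth Hash s (j - r) = Sig e.2 & nth Hash s (k - r) = Hash].
Proof.
move=> ijk /count_memPn no_phi; have [p fit agr] := close_window_agreements ijk.
set c := choice_string k E i j in fit agr *; set Q := agreements Hash c s p in agr.
have in_blocks x : x < size c -> x %/ k.*2.+1 < size E.
  by rewrite ltn_divLR // /c size_choice_string //; lia.
have at_offset q : q \in Q -> q <= k /\ nth Hash s q = nth Hash c (p + q).
  rewrite mem_filter mem_iota size_s => /andP[/eqP agree /andP[_ lt_q]].
  by split; [lia | rewrite agree].
have Q_res : {in Q, forall q, q <= k /\ (p + q) %% k.*2.+1 \in [:: i; j; k]}.
  move=> q /at_offset[le_q s_q]; split => //.
  have lt_x : p + q < size c by lia.
  have [e _ nth_e] := nth_choice_string ijk (in_blocks _ lt_x).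
  apply: (period_sym_nonphi (e := e)); rewrite -nth_e ?ltn_pmod -?divn_eq //.
  by rewrite -s_q; apply: contraNneq no_phi => <-; rewrite mem_nth // size_s.
have [r_le Q_eq] := window_meets_block ijk (filter_uniq _ (iota_uniq _ _)) agr Q_res.
set r := p %% k.*2.+1 in r_le Q_eq; have p_eq : p = p %/ k.*2.+1 * k.*2.+1 + r := divn_eq _ _.
have lt_p : p < size c by lia.
have [e e_in nth_e] := nth_choice_string ijk (in_blocks p lt_p).
have aligned o : o \in [:: i; j; k] -> nth Hash s (o - r) = period_sym k i j e o.
  move=> o_in; have le_io : i <= o <= k by move: o_in; rewrite !inE; lia.
  have: o - r \in Q by rewrite Q_eq; move: o_in; rewrite !inE; lia.
  move=> /at_offset[_ ->]; have -> : p + (o - r) = p %/ k.*2.+1 * k.*2.+1 + o by lia.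
  by apply: nth_e; rewrite -?/c; lia.
exists r, e; split => //; rewrite aligned ?inE ?eqxx ?orbT //.
- exact: period_sym_fst.
- exact: period_sym_snd.
- exact: period_sym_last.
Qed.

Lemma sum_phi_count_le (l : seq (nat * nat)) : uniq l ->
  {in l, forall p, p.1 < p.2 < k} -> \sum_(p <- l) phi_count p.1 p.2 <= n_phi.
Proof.
move=> uniq_l valid_l.
rewrite -(big_map (fun p => Phi (pair_pos k p.1 p.2)) xpredT (fun x => count_mem x s)).
rewrite sum_count_mem; first by apply: sub_count => _ /mapP[p _ ->].
rewrite map_inj_in_uniq // => [[i j] [i' j']] /valid_l ijk /valid_l ijk' [].
exact: pair_pos_inj.
Qed.

Lemma n_phi_le : n_phi <= k - 2.
Proof.
pose l := (1, 2) :: [seq (0, t) | t <- iota 1 k.-1].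
have valid_l : {in l, forall p, p.1 < p.2 < k}.
  move=> p; rewrite inE => /orP[/eqP -> | /mapP[t t_in ->]] /=; first lia.
  by move: t_in; rewrite mem_iota; lia.
have uniq_l : uniq l.
  rewrite /= map_inj_uniq ?iota_uniq ?andbT => [|? ? []] //.
  by apply/mapP => -[t _ []].
have lower : size l * (3 - (k.+1 - n_phi)) <= \sum_(p <- l) phi_count p.1 p.2.
  by apply: sum_nat_ge_const => p /valid_l ijk; have := phi_count_lower ijk; lia.
have upper := sum_phi_count_le uniq_l valid_l.
have n_phi_le : n_phi <= k.+1 by rewrite -size_s count_size.
move: lower; rewrite /= size_map size_iota; nia.
Qed.

Lemma first_sig_last_hash : is_sig (nth Hash s 0) /\ nth Hash s k = Hash.
Proof.
have [t t_k phi_free] : exists2 t, 0 < t < k & phi_count 0 t = 0.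
  pose l := [seq (0, t) | t <- iota 1 k.-1].
  have valid_l : {in l, forall p, p.1 < p.2 < k}.
    by move=> p /mapP[t]; rewrite mem_iota => t_in -> /=; lia.
  have uniq_l : uniq l by rewrite map_inj_uniq ?iota_uniq // => ? ? [].
  have [/allP phi_used | ] := boolP (all (fun p => 0 < phi_count p.1 p.2) l).
    have lower : size l * 1 <= \sum_(p <- l) phi_count p.1 p.2 := sum_nat_ge_const phi_used.
    have := sum_phi_count_le uniq_l valid_l; have := n_phi_le.
    by move: lower; rewrite size_map size_iota; lia.
  case/allPn => _ /mapP[t t_in ->]; rewrite /= lt0n negbK => /eqP phi_free.
  by exists t => //; move: t_in; rewrite mem_iota; lia.
have [r [e [le_r _ s_0 _ s_k]]] := phi_free_window_aligned t_k phi_free.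
have r0 : r = 0 by lia.
by move: s_0 s_k; rewrite r0 !subn0 => -> ->.
Qed.

Lemma inner_non_sig_phi_used t : 0 < t < k -> ~~ is_sig (nth Hash s t) -> 0 < phi_count 0 t.
Proof.
move=> t_k not_sig; rewrite lt0n; apply/eqP => phi_free.
have [r [e [le_r _ _ s_t _]]] := phi_free_window_aligned t_k phi_free.
have r0 : r = 0 by lia.
by move: s_t not_sig; rewrite r0 subn0 => ->.
Qed.

Lemma n_phi_add_inner_hashes :
  n_phi + count (fun t => nth Hash s t == Hash) (iota 1 k.-1) =
  count (fun t => ~~ is_sig (nth Hash s t)) (iota 1 k.-1).
Proof.
have [sig_0 hash_k] := first_sig_last_hash.
have iota_split : iota 0 k.+1 = 0 :: iota 1 k.-1 ++ [:: k].
  have k_pos : 0 < k by lia.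
  by rewrite -[in LHS](prednK k_pos) -[k.-1.+2]addn1 iotaD /= prednK.
rewrite /n_phi (count_nth_iota Hash) size_s iota_split /= count_cat /= hash_k.
rewrite (_ : is_phi (nth Hash s 0) = false); last by case: (nth Hash s 0) sig_0 => [[]|].
rewrite -[is_phi Hash]/false !addn0 add0n -count_predUI.
rewrite (@eq_count _ (predI _ _) pred0) ?count_pred0 ?addn0.
  by apply: eq_count => t /=; case: (nth Hash s t) => [[]|[]].
by move=> t /=; case: (nth Hash s t) => [[]|[]].
Qed.

Lemma inner_phi_hash_count0 i j : 0 < i -> i < j < k ->
  phi_count i j + count (fun t => nth Hash s t == Hash) (iota 1 k.-1) = 0.
Proof.
move=> i_pos ijk; pose T := [seq t <- iota 1 k.-1 | ~~ is_sig (nth Hash s t)].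
have valid_l : {in (i, j) :: [seq (0, t) | t <- T], forall p, p.1 < p.2 < k}.
  move=> p; rewrite inE => /orP[/eqP -> // | /mapP[t]].
  by rewrite mem_filter mem_iota => /andP[_ t_in] -> /=; lia.
have uniq_l : uniq ((i, j) :: [seq (0, t) | t <- T]).
  rewrite /= map_inj_uniq => [|? ? []] //; rewrite filter_uniq ?iota_uniq // andbT.
  by apply/mapP => -[t _ [i0]]; lia.
have lower : size T <= \sum_(t <- T) phi_count 0 t.
  rewrite -[size T]muln1; apply: sum_nat_ge_const => t.
  rewrite mem_filter mem_iota => /andP[not_sig t_in]; apply: inner_non_sig_phi_used => //; lia.
have := sum_phi_count_le uniq_l valid_l; rewrite big_cons big_map /=.
have size_T : size T = count (fun t => ~~ is_sig (nth Hash s t)) (iota 1 k.-1).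
  exact: size_filter.
have := n_phi_add_inner_hashes; lia.
Qed.

Lemma inner_pair_phi_free i j : 0 < i -> i < j < k -> phi_count i j = 0.
Proof. by move=> i_pos /(inner_phi_hash_count0 i_pos); lia. Qed.

Lemma no_inner_hash t : 0 < t < k -> nth Hash s t != Hash.
Proof.
move=> t_k; have ij : 1 < 2 < k by lia.
have /eqP := inner_phi_hash_count0 (ltn0Sn 0) ij; rewrite addn_eq0 => /andP[_ /eqP no_hash].
have : ~~ has (fun t => nth Hash s t == Hash) (iota 1 k.-1) by rewrite has_count no_hash.
by move=> /hasPn; apply; rewrite mem_iota; lia.
Qed.

Lemma phi_free_pair_edge i j : i < j < k -> phi_count i j = 0 ->
  exists2 e, e \in E & nth Hash s i = Sig e.1 /\ nth Hash s j = Sig e.2.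
Proof.
move=> ijk /(phi_free_window_aligned ijk)[r [e [le_ri e_in s_i s_j s_k]]].
have [r0 | r_pos] := posnP r; first by exists e; move: s_i s_j; rewrite r0 !subn0.
have inner : 0 < k - r < k by lia.
by have := no_inner_hash inner; rewrite s_k eqxx.
Qed.

Lemma prefix_sig t : t < k -> is_sig (nth Hash s t).
Proof.
case: t => [_ | [|t] lt_t]; first by case: first_sig_last_hash.
  have ij : 1 < 2 < k by lia.
  by have [e _ [-> _]] := phi_free_pair_edge ij (inner_pair_phi_free (ltn0Sn 0) ij).
have ij : 1 < t.+2 < k by lia.
by have [e _ [_ ->]] := phi_free_pair_edge ij (inner_pair_phi_free (ltn0Sn 0) ij).
Qed.

Lemma n_phi0 : n_phi = 0.
Proof.
have [_ hash_k] := first_sig_last_hash.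
apply/eqP; rewrite -leqn0 leqNgt -has_count; apply/hasPn => _ /(nthP Hash)[t lt_t <-].
move: lt_t; rewrite size_s ltnS leq_eqVlt => /orP[/eqP -> | /prefix_sig].
  by rewrite hash_k.
by case: (nth Hash s t) => [[]|].
Qed.

Lemma pair_edge i j : i < j < k ->
  exists2 e, e \in E & nth Hash s i = Sig e.1 /\ nth Hash s j = Sig e.2.
Proof.
move=> ijk; apply: phi_free_pair_edge => //; apply/eqP; rewrite -leqn0 -n_phi0.
by apply: sub_count => x /eqP ->.
Qed.

End CloseWindows.

Theorem proposition2 (n k : nat) (E : seq ('I_n * 'I_n)) (s : seq (sym n)) :
  uniq E ->
  (forall e, e \in E -> e.1 < e.2) ->
  3 <= k ->
  size s = k.+1 ->
  all (in_alphabet k) s ->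
  (forall i j : nat, i < j < k ->
     has_close_substring (choice_string k E i j) s k.+1 (k - 2)) ->
  exists h : 'I_k -> 'I_n,
    (forall t : 'I_k, nth Hash s t = Sig (h t)) /\
    (forall a b : 'I_k, a != b -> adj E (h a) (h b)).
Proof.
move=> _ _ k_ge3 size_s _ close; have edge := pair_edge k_ge3 size_s close.
have sig_at t : t < k -> exists r, nth Hash s t = Sig r.
  by move/(prefix_sig k_ge3 size_s close); case: (nth Hash s t) => [[r|]|] //; exists r.
have [r0 _] := sig_at 0 (ltnW (ltnW k_ge3)).
pose h (t : 'I_k) := if nth Hash s t is inl (inl r) then r else r0.
have h_spec (t : 'I_k) : nth Hash s t = Sig (h t).
  by rewrite /h; have [r ->] := sig_at t (ltn_ord t).
exists h; split => // a b; wlog lt_ab : a b / a < b => [wlog_lt ne_ab | _].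
  case: (ltngtP a b) => [lt_ab | gt_ab | eq_ab]; first exact: wlog_lt.
    by rewrite /adj orbC; apply: wlog_lt; rewrite // eq_sym.
  by move: ne_ab; rewrite (val_inj eq_ab) eqxx.
have ab : a < b < k by rewrite lt_ab ltn_ord.
have [e e_in [s_a s_b]] := edge _ _ ab.
by move: s_a s_b; rewrite !h_spec => -[->] [->]; rewrite /adj -surjective_pairing e_in.
Qed.
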